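(* Let $P$ be any product rule and $\mathcal A=\langle X,F,\Delta\rangle$ a $P$-automaton. Then for every term $\alpha\in\mathrm{Terms}(X)$, $[\![\alpha]\!]_{\mathcal A}=[\![\alpha]\!]_\varrho$, where $\varrho:X\to\mathbb Q\langle\langle\Sigma\rangle\rangle$ is the valuation $\varrho(x)=[\![x]\!]_{\mathcal A}$.
   Context: Let $\Sigma$ be a finite alphabet, $\Sigma^*$ the set of finite words with empty word $\varepsilon$. A series is a function $f:\Sigma^*\to\mathbb Q$; $f_w=f(w)$; series form a $\mathbb Q$-vector space under pointwise operations with zero $\mathbb 0$. For $a\in\Sigma$, $\delta_af$ is $w\mapsto f(aw)$. Terms: $\mathrm{Terms}(X)$ generated by $u,v::=x\mid 0\mid c\cdot u\mid u+v\mid u*v$ ($x\in X$, $c\in\mathbb Q$). A product rule is a term $P$ over $\{x,\dot x,y,\dot y\}$; $P(s_1,s_2,s_3,s_4)$ is substitution for $x,\dot x,y,\dot y$. The $P$-product $*$ and semantics $[\![u]\!]_\varrho$ under valuations $\varrho:X\to$ series are the unique pair with $(f*g)_\varepsilon=f_\varepsilon g_\varepsilon$, $\delta_a(f*g)=[\![P]\!]_{[x\mapsto f,\dot x\mapsto\delta_af,y\mapsto g,\dot y\mapsto\delta_ag]}$, and $[\![\cdot]\!]_\varrho$ interpreting variables via $\varrho$ and constructors by zero, scalar multiplication, addition, $*$. $P$-automaton: a tuple $\mathcal A=\langle X,F,\Delta\rangle$ with variable set $X$, output $F:X\to\mathbb Q$, transitions $\Delta_a:X\to\mathrm{Terms}(X)$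 for $a\in\Sigma$. The $P$-extension of $D:X\to\mathrm{Terms}(X)$ is $\tilde D:\mathrm{Terms}(X)\to\mathrm{Terms}(X)$ with $\tilde D0=0$, $\tilde Dx=Dx$, $\tilde D(c\cdot\alpha)=c\cdot\tilde D\alpha$, $\tilde D(\alpha+\beta)=\tilde D\alpha+\tilde D\beta$, $\tilde D(\alpha*\beta)=P(\alpha,\tilde D\alpha,\beta,\tilde D\beta)$. $F$ is extended to terms by evaluation in $\mathbb Q$. The series recognised by $\alpha\in\mathrm{Terms}(X)$ is the unique $[\![\alpha]\!]_{\mathcal A}$ with $([\![\alpha]\!]_{\mathcal A})_\varepsilon=F(\alpha)$ and $\delta_a[\![\alpha]\!]_{\mathcal A}=[\![\tilde\Delta_a\alpha]\!]_{\mathcal A}$ for all $a\in\Sigma$. *)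

From mathcomp Require Import all_boot all_algebra.
Set Implicit Arguments. Unset Strict Implicit. Unset Printing Implicit Defensive.
Import GRing.Theory.
Local Open Scope ring_scope.

Inductive term (V : Type) : Type :=
  | TVar of V
  | TZero
  | TScale of rat & term V
  | TAdd of term V & term V
  | TMul of term V & term V.
Arguments TZero {V}.

Inductive pvar : Type := PX | PdX | PY | PdY.

Definition series (S : finType) := seq S -> rat.

Definition delta (S : finType) (a : S) (f : series S) : series S :=
  fun w => f (a :: w).

Fixpoint sem_with (S : finType) (V : Type)
    (pr : series S -> series S -> series S) (rho : V -> series S) (t : term V)
    : series S :=
  match t with
  | TVar x => rho x
  | TZero => fun _ => 0
  | TScale c u => fun w => c * sem_with pr rho u w
  | TAdd u v => fun w => sem_with pr rho u w + sem_with pr rho v w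
  | TMul u v => pr (sem_with pr rho u) (sem_with pr rho v)
  end.

Definition pval (S : finType) (f df g dg : series S) : pvar -> series S :=
  fun p => match p with PX => f | PdX => df | PY => g | PdY => dg end.

(* n-th approximation of the P-product; correct on words of length <= n *)
Fixpoint prodN (S : finType) (P : term pvar) (n : nat)
    : series S -> series S -> series S :=
  match n with
  | 0 => fun f g _ => f [::] * g [::]
  | n'.+1 => fun f g w =>
      match w with
      | [::] => f [::] * g [::]
      | a :: w' =>
          sem_with (prodN P n') (pval f (delta a f) g (delta a g)) P w'
      end
  end.

(* The P-product: (f*g)_eps = f_eps g_eps,
   delta_a (f*g) = [[P]]_[x->f, x'->delta_a f, y->g, y'->delta_a g] *)
Definition pprod (S : finType) (P : term pvar) (f g : series S) : series S :=
  fun w => prodN P (size w) f g w.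

Definition sem (S : finType) (V : Type) (P : term pvar) (rho : V -> series S)
    (t : term V) : series S := sem_with (pprod P) rho t.

Fixpoint subst (V W : Type) (s : V -> term W) (t : term V) : term W :=
  match t with
  | TVar x => s x
  | TZero => TZero
  | TScale c u => TScale c (subst s u)
  | TAdd u v => TAdd (subst s u) (subst s v)
  | TMul u v => TMul (subst s u) (subst s v)
  end.

Definition psubst (X : Type) (P : term pvar) (s1 s2 s3 s4 : term X) : term X :=
  subst (fun p => match p with PX => s1 | PdX => s2 | PY => s3 | PdY => s4 end) P.

Record automaton (S : finType) (X : Type) := Automaton {
  out : X -> rat;
  trans : S -> X -> term X
}.

Fixpoint Fext (X : Type) (F : X -> rat) (t : term X) : rat :=
  match t with
  | TVar x => F x
  | TZero => 0
  | TScale c u => c * Fext F u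
  | TAdd u v => Fext F u + Fext F v
  | TMul u v => Fext F u * Fext F v
  end.

Fixpoint Dtilde (X : Type) (P : term pvar) (D : X -> term X) (t : term X)
    : term X :=
  match t with
  | TVar x => D x
  | TZero => TZero
  | TScale c u => TScale c (Dtilde P D u)
  | TAdd u v => TAdd (Dtilde P D u) (Dtilde P D v)
  | TMul u v => psubst P u (Dtilde P D u) v (Dtilde P D v)
  end.

Fixpoint recog_at (S : finType) (X : Type) (P : term pvar)
    (A : automaton S X) (w : seq S) (t : term X) {struct w} : rat :=
  match w with
  | [::] => Fext (out A) t
  | a :: w' => recog_at P A w' (Dtilde P (trans A a) t)
  end.

(* [[alpha]]_A : the unique series with value F(alpha) at eps and
   delta_a [[alpha]]_A = [[Dtilde_a alpha]]_A *)
Definition recognised (S : finType) (X : Type) (P : term pvar)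
    (A : automaton S X) (t : term X) : series S :=
  fun w => recog_at P A w t.

From mathcomp Require Import all_boot all_algebra.
From Stdlib Require Import FunctionalExtensionality.
Set Implicit Arguments. Unset Strict Implicit. Unset Printing Implicit Defensive.

(* All operations on series are causal: their values on words of length at
   most n only depend on the arguments on words of length at most n.  This
   makes the approximations [prodN P n] exact up to length n, so the P-product
   satisfies its defining equation under [delta a].  The semantics of terms
   under the valuation [x |-> [[x]]_A] then obeys the same equations as
   [[.]]_A, at the empty word and under every [delta a], and the two agree
   by induction on the length of words. *)

Definition agree (S : finType) (n : nat) (f g : series S) :=
  forall w : seq S, (size w <= n)%N -> f w = g w.

Lemma agree_le (S : finType) m n (f g : series S) :
  (m <= n)%N -> agree n f g -> agree m f g.
Proof. by move=> le_mn fg w le_wm; apply: fg; apply: leq_trans le_wm le_mn. Qed.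

Lemma agree_trans (S : finType) n (f g h : series S) :
  agree n f g -> agree n g h -> agree n f h.
Proof. by move=> fg gh w le_wn; rewrite fg // gh. Qed.

Lemma sem_with_agree (S : finType) (V : Type) n
    (pr pr' : series S -> series S -> series S) (rho rho' : V -> series S) t :
  (forall f f' g g', agree n f f' -> agree n g g' -> agree n (pr f g) (pr' f' g')) ->
  (forall x, agree n (rho x) (rho' x)) ->
  agree n (sem_with pr rho t) (sem_with pr' rho' t).
Proof.
move=> pr_agree rho_agree.
elim: t => [x||c u IHu|u IHu v IHv|u IHu v IHv] /= w le_wn //.
- exact: rho_agree.
- by rewrite IHu.
- by rewrite IHu // IHv.
- exact: pr_agree.
Qed.

Lemma pval_agree (S : finType) n (f f' df df' g g' dg dg' : series S) :
  agree n f f' -> agree n df df' -> agree n g g' -> agree n dg dg' ->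
  forall p, agree n (pval f df g dg p) (pval f' df' g' dg' p).
Proof. by move=> ? ? ? ? []. Qed.

Lemma prodN_agree (S : finType) (P : term pvar) n (f f' g g' : series S) :
  agree n f f' -> agree n g g' -> agree n (prodN P n f g) (prodN P n f' g').
Proof.
elim: n f f' g g' => [|n IH] f f' g g' ff' gg' [|a w] le_wn /=;
  try by rewrite ff' // gg'.
apply: (sem_with_agree (n := n) _ _ _ le_wn) => [? ? ? ? ? ?|]; first exact: IH.
by apply: pval_agree => w' le_w'n; rewrite /delta (ff', gg') // leqW.
Qed.

Lemma pprod_agree (S : finType) (P : term pvar) n (f f' g g' : series S) :
  agree n f f' -> agree n g g' -> agree n (pprod P f g) (pprod P f' g').
Proof.
move=> ff' gg' w le_wn.
exact: prodN_agree (agree_le le_wn ff') (agree_le le_wn gg') _ (leqnn _).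
Qed.

Lemma prodN_pprod_agree (S : finType) (P : term pvar) n (f g : series S) :
  agree n (prodN P n f g) (pprod P f g).
Proof.
elim/ltn_ind: n f g => n IH f g [|a w] le_wn; first by case: n {IH le_wn}.
case: n IH le_wn => [|n] // IH le_wn.
have prodN_to_pprod m : (m <= n)%N -> (size w <= m)%N ->
    sem_with (prodN P m) (pval f (delta a f) g (delta a g)) P w =
    sem_with (pprod P) (pval f (delta a f) g (delta a g)) P w.
  move=> le_mn le_wm; apply: (sem_with_agree _ _ _ (leqnn _)) => // f1 f1' g1 g1' h1 h2.
  exact: agree_trans (agree_le le_wm (IH m le_mn f1 g1)) (pprod_agree P h1 h2).
by rewrite /pprod /= (prodN_to_pprod n) // (prodN_to_pprod (size w)).
Qed.

Lemma pprod_cons (S : finType) (P : term pvar) (f g : series S) a w :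
  pprod P f g (a :: w) = sem P (pval f (delta a f) g (delta a g)) P w.
Proof.
rewrite /pprod /=; apply: (sem_with_agree _ _ _ (leqnn _)) => // f1 f1' g1 g1' h1 h2.
exact: agree_trans (prodN_agree P h1 h2) (prodN_pprod_agree P f1' g1').
Qed.

Lemma sem_nil (S : finType) (V : Type) (P : term pvar) (rho : V -> series S) t :
  sem P rho t [::] = Fext (fun x => rho x [::]) t.
Proof. by elim: t => //= [c u <-|u <- v <-|u <- v <-]. Qed.

Lemma sem_subst (S : finType) (V W : Type) pr (rho : W -> series S)
    (s : V -> term W) t :
  sem_with pr rho (subst s t) = sem_with pr (fun p => sem_with pr rho (s p)) t.
Proof. by elim: t => //= [c u ->|u -> v ->|u -> v ->]. Qed.

Lemma sem_Dtilde_agree (S : finType) (X : Type) (P : term pvar)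
    (rho : X -> series S) (D : X -> term X) a n :
  (forall x, agree n (delta a (rho x)) (sem P rho (D x))) ->
  forall t, agree n (delta a (sem P rho t)) (sem P rho (Dtilde P D t)).
Proof.
move=> D_agree; elim=> [x||c u IHu|u IHu v IHv|u IHu v IHv] w le_wn //=.
- exact: D_agree.
- by have /= := IHu w le_wn; rewrite /delta /sem /= => ->.
- by have /= := IHu w le_wn; have /= := IHv w le_wn; rewrite /delta /sem /= => -> ->.
rewrite /delta {1}/sem /= pprod_cons /psubst /sem sem_subst.
apply: (sem_with_agree (n := n) _ _ _ le_wn) => [? ? ? ? ? ?|]; first exact: pprod_agree.
by case.
Qed.

Theorem mainTheorem6 (S : finType) (X : Type) (P : term pvar)
    (A : automaton S X) (alpha : term X) :
  recognised P A alpha = sem P (fun x => recognised P A (TVar x)) alpha.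
Proof.
set rho := fun x => recognised P A (TVar x).
suff agree_sem n t : agree n (recognised P A t) (sem P rho t).
  by apply: functional_extensionality => w; apply: (agree_sem (size w)).
elim: n t => [|n IH] t [|a w] le_wn //; try by rewrite sem_nil.
have D_agree x : agree n (delta a (rho x)) (sem P rho (trans A a x)).
  by move=> w'; apply: (IH (trans A a x)).
rewrite /recognised /= -/(recognised P A _ w) IH //.
by symmetry; apply: (sem_Dtilde_agree D_agree).
Qed.
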